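(* Let $k$ be a field, $V$ an $n$-dimensional $k$-vector space, $S=\operatorname{Sym}V=k[x_1,\dots,x_n]$. If $f\in S_{d+1}$ is an LDS form of degree $d+1\geq 3$, then $f$ is not GIT semistable with respect to the standard action of $\mathrm{SL}(n)=\mathrm{SL}(V)$ on $S_{d+1}$.
   Context: A form $f\in S_{d+1}$ is called an LDS form if, after a linear change of variables, it can be written as $f(x_1,\dots,x_n)=\sum_{i=1}^{\ell} x_i\,\frac{\partial H(x_{\ell+1},\dots,x_{2\ell})}{\partial x_{\ell+i}}+G(x_{\ell+1},\dots,x_n)$, where $H$ and $G$ are forms of degree $d+1$ in $\ell$ and $n-\ell$ variables respectively. *)

From HB Require Import structures.
From mathcomp Require Import all_boot all_order all_algebra.
From mathcomp Require Import mpoly.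
Set Implicit Arguments. Unset Strict Implicit. Unset Printing Implicit Defensive.
Import Order.TTheory GRing.Theory.
Local Open Scope ring_scope.

(* Monomials of degree exactly d+1 in n variables: they index the coordinates
   (coefficients) of the space S_{d+1} of forms of degree d+1. *)
Definition Mon (n d : nat) := {m : 'X_{1..n < d.+2} | mdeg m == d.+1}.

Definition coeffs (K : fieldType) (n d : nat) (f : {mpoly K[n]})
  : 'I_#|{: Mon n d}| -> K :=
  fun j => f@_(val (val (enum_val j))).
Arguments coeffs {K n} d f _.

Definition act (K : fieldType) (n : nat) (g : 'M[K]_n) (f : {mpoly K[n]})
  : {mpoly K[n]} :=
  f \mPo [tuple \sum_(j < n) g i j *: 'X_j | i < n].

(* F, a polynomial function (with coefficients in k) on S_{d+1}, is invariant
   under SL(n) as an algebraic group: invariance is required on K-points for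
   every field extension K of k (this is what rules out spurious invariants
   of SL_n(k) when k is finite). *)
Definition SL_invariant (k : fieldType) (n d : nat)
  (F : {mpoly k[#|{: Mon n d}|]}) : Prop :=
  forall (K : fieldType) (iota : {rmorphism k -> K}) (g : 'M[K]_n),
    \det g = 1 ->
    forall h : {mpoly K[n]}, h \is (d.+1).-homog ->
      (map_mpoly iota F).@[coeffs d (act g h)]
      = (map_mpoly iota F).@[coeffs d h].

Definition semistable (k : fieldType) (n d : nat) (f : {mpoly k[n]}) : Prop :=
  exists m : nat, (0 < m)%N /\
    exists F : {mpoly k[#|{: Mon n d}|]},
      F \is m.-homog /\ SL_invariant F /\ F.@[coeffs d f] != 0.

(* LDS forms of degree d+1 (0-based variable indices: x_1..x_l are indices
   0..l-1, x_{l+1}..x_{2l} are l..2l-1, x_{l+1}..x_n are l..n-1). *)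
Definition LDS (k : fieldType) (n d : nat) (f : {mpoly k[n]}) : Prop :=
  exists l : nat, (0 < l)%N /\ (2 * l <= n)%N /\
  exists A : 'M[k]_n, A \in unitmx /\
  exists H G : {mpoly k[n]},
    H \is (d.+1).-homog /\ G \is (d.+1).-homog /\
    (forall m, m \in msupp H -> forall i : 'I_n, m i != 0%N -> (l <= i < 2 * l)%N) /\
    (forall m, m \in msupp G -> forall i : 'I_n, m i != 0%N -> (l <= i)%N) /\
    f = act A (\sum_(i < n) \sum_(j < n | (i < l)%N && (j == l + i :> nat))
                  'X_i * mderiv j H + G).

(* Hilbert-Mumford criterion, easy direction.  For the weights [lds_weight],
   which sum to 0, every monomial of the LDS part [lds_poly] has positive
   weight.  Let lambda(t) be the one-parameter subgroup diag(t^w_i) of SL_n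
   over k(t), conjugated by A: the coefficients of lambda(t) . f are then
   polynomials in t vanishing at t = 0.  An invariant F satisfies
   F(f) = F(lambda(t) . f), an identity in k[t] whose value at t = 0 is
   F(0) = 0, F being homogeneous of positive degree. *)
From HB Require Import structures.
From mathcomp Require Import all_boot all_order all_algebra.
From mathcomp Require Import mpoly zify.
Set Implicit Arguments. Unset Strict Implicit. Unset Printing Implicit Defensive.
Import Order.TTheory GRing.Theory Num.Theory.
Local Open Scope ring_scope.

Lemma comp_mpolyA (R : comNzRingType) (n k l : nat) (p : {mpoly R[n]})
    (lq : n.-tuple {mpoly R[k]}) (lr : k.-tuple {mpoly R[l]}) :
  (p \mPo lq) \mPo lr = p \mPo [tuple tnth lq i \mPo lr | i < n].
Proof.
rewrite (comp_mpolyEX p lq) (comp_mpolyEX p [tuple _ | i < n]) raddf_sum.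
apply: eq_bigr => m _; rewrite /= comp_mpolyZ comp_mpolyX rmorph_prod comp_mpolyX.
by congr (_ *: _); apply: eq_bigr => i _; rewrite rmorphXn tnth_mktuple.
Qed.

Section LinearSubstitution.
Variables (R : comNzRingType) (n : nat).
Implicit Types (g A : 'M[R]_n) (p : {mpoly R[n]}).

Definition lin_subst g p : {mpoly R[n]} :=
  p \mPo [tuple \sum_(j < n) g i j *: 'X_j | i < n].

Lemma lin_substM A g p : lin_subst g (lin_subst A p) = lin_subst (A *m g) p.
Proof.
rewrite /lin_subst comp_mpolyA; congr (_ \mPo _); apply: eq_from_tnth => i.
rewrite !tnth_mktuple raddf_sum /=.
under eq_bigr do rewrite comp_mpolyZ comp_mpolyXU -tnth_nth tnth_mktuple scaler_sumr.
rewrite exchange_big /=; apply: eq_bigr => j _.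
by rewrite mxE scaler_suml; apply: eq_bigr => k _; rewrite scalerA.
Qed.

Lemma lin_subst_diag (r : 'I_n -> R) p :
  lin_subst (diag_mx (\row_i r i)) p =
  \sum_(m <- msupp p) (p@_m * \prod_i r i ^+ m i) *: 'X_[m].
Proof.
rewrite /lin_subst comp_mpolyEX; apply: eq_bigr => m _.
rewrite -scalerA comp_mpolyX; congr (_ *: _).
transitivity (\prod_i ((r i)%:MP * 'X_i) ^+ m i).
  apply: eq_bigr => i _; congr (_ ^+ _).
  rewrite tnth_mktuple (bigD1 i) //= big1 ?addr0.
    by rewrite !mxE eqxx mulr1n mul_mpolyC.
  by move=> j /negbTE ji; rewrite mxE eq_sym ji mulr0n scale0r.
under eq_bigr do rewrite exprMn.
rewrite big_split /= -mpolyXE_id -mul_mpolyC rmorph_prod /=; congr (_ * _).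
by apply: eq_bigr => i _; rewrite rmorphXn.
Qed.

End LinearSubstitution.

Lemma actE (K : fieldType) n (g : 'M[K]_n) (p : {mpoly K[n]}) : act g p = lin_subst g p.
Proof. by []. Qed.

Lemma map_mpoly_lin_subst (R S : comNzRingType) (phi : {rmorphism R -> S}) n
    (g : 'M[R]_n) p :
  map_mpoly phi (lin_subst g p) = lin_subst (map_mx phi g) (map_mpoly phi p).
Proof.
rewrite /lin_subst; elim/mpolyind: p => [|c m p _ _ IH]; first by rewrite !raddf0.
rewrite !raddfD /= IH; congr (_ + _).
rewrite comp_mpolyZ !map_mpolyZ map_mpolyX comp_mpolyZ; congr (_ *: _).
rewrite !comp_mpolyX rmorph_prod; apply: eq_bigr => i _.
rewrite rmorphXn /= !tnth_mktuple rmorph_sum /=; congr (_ ^+ _).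
by apply: eq_bigr => j _; rewrite map_mpolyZ map_mpolyX mxE.
Qed.

Lemma meval_map_mpoly (R S : comNzRingType) (phi : {rmorphism R -> S}) n
    (p : {mpoly R[n]}) (v : 'I_n -> R) :
  (map_mpoly phi p).@[phi \o v] = phi p.@[v].
Proof.
elim/mpolyind: p => [|c m p _ _ IH]; first by rewrite !raddf0.
rewrite raddfD /= !mevalD IH rmorphD map_mpolyZ map_mpolyX !mevalZ !mevalX.
rewrite rmorphM rmorph_prod; congr (_ * _ + _).
by apply: eq_bigr => i _; rewrite rmorphXn.
Qed.

Lemma dhomog_meval0 (R : comNzRingType) n m (p : {mpoly R[n]}) :
  (0 < m)%N -> p \is m.-homog -> p.@[fun _ => 0] = 0.
Proof.
move=> m_gt0 p_homog; rewrite mevalE big_seq big1 // => mm mm_p.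
have: mdeg mm != 0%N by rewrite (dhomog_mf p_homog mm_p) -lt0n.
rewrite mdegE sum_nat_eq0 negb_forall => /existsP [i /= mm_i].
by rewrite (bigD1 i) //= expr0n (negbTE mm_i) mul0r mulr0.
Qed.

Lemma prod_expfz (K : fieldType) (t : K) (I : finType) (z : I -> int) :
  t != 0 -> \prod_i t ^ z i = t ^ (\sum_i z i).
Proof.
by move=> t_nz; rewrite (big_morph _ (fun a b => expfzDr a b t_nz) (expr0z t)).
Qed.

Section Weights.
Variables (n : nat) (w : 'I_n -> int).

Definition wdeg (m : 'X_{1..n}) : int := \sum_i w i * (m i)%:Z.

Lemma wdegD m1 m2 : wdeg (m1 + m2) = wdeg m1 + wdeg m2.
Proof.
by rewrite /wdeg -big_split; apply: eq_bigr => i _; rewrite mnmDE PoszD mulrDr.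
Qed.

Lemma wdegU i : wdeg U_(i) = w i.
Proof.
rewrite /wdeg (bigD1 i) //= mnm1E eqxx mulr1 big1 ?addr0 // => j ji.
by rewrite mnm1E eq_sym (negbTE ji) mulr0.
Qed.

Variables (K : fieldType) (t : K).
Hypothesis t_nz : t != 0.

Lemma det_diag_expfz : \sum_i w i = 0 -> \det (diag_mx (\row_i t ^ w i)) = 1.
Proof.
move=> w_sum0; rewrite det_diag -[RHS](expr0z t) -w_sum0 -prod_expfz //.
by apply: eq_bigr => i _; rewrite mxE.
Qed.

Lemma lin_subst_diag_expfz (p : {mpoly K[n]}) :
  lin_subst (diag_mx (\row_i t ^ w i)) p =
  \sum_(m <- msupp p) (p@_m * t ^ wdeg m) *: 'X_[m].
Proof.
rewrite lin_subst_diag; apply: eq_bigr => m _; congr ((_ * _) *: _).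
rewrite -prod_expfz //; apply: eq_bigr => i _.
by rewrite exprnP exprz_exp.
Qed.

End Weights.

Lemma tofrac_inj (R : idomainType) : injective (@tofrac R).
Proof. by move=> p q /eqP; rewrite tofrac_eq => /eqP. Qed.

Section OneParameterSubgroup.
Variable k : fieldType.
Local Notation K := {fraction {poly k}}.
Definition frac_const : {rmorphism k -> K} := (@tofrac _) \o polyC.
Local Notation t := (tofrac 'X : K).

Lemma tofracX_neq0 : t != 0.
Proof. by rewrite tofrac_eq0 polyX_eq0. Qed.

Lemma homog_vanishes_at_limit0 N m (F : {mpoly k[N]}) (q : 'I_N -> {poly k})
    (v : 'I_N -> k) :
  (0 < m)%N -> F \is m.-homog -> (forall j, (q j).[0] = 0) ->
  (map_mpoly frac_const F).@[(@tofrac _) \o q] = frac_const F.@[v] -> F.@[v] = 0.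
Proof.
move=> m_gt0 F_homog q0.
have ->: map_mpoly frac_const F = map_mpoly (@tofrac _) (map_mpoly polyC F).
  apply/mpolyP => mm.
  by rewrite [LHS]mcoeff_map_mpoly (mcoeff_map_mpoly (@tofrac _)) mcoeff_map_mpoly.
rewrite (meval_map_mpoly (@tofrac _)) => /tofrac_inj /(congr1 (horner_eval 0)).
rewrite -(meval_map_mpoly (horner_eval 0)) horner_evalE hornerC => <-.
have ->: map_mpoly (horner_eval 0) (map_mpoly polyC F) = F.
  apply/mpolyP => mm.
  by rewrite (mcoeff_map_mpoly (horner_eval 0)) mcoeff_map_mpoly /= horner_evalE hornerC.
rewrite (meval_eq _ (v2 := fun _ => 0)); first exact: dhomog_meval0 m_gt0 F_homog.
by move=> j; rewrite /= horner_evalE q0.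
Qed.

Variables (n : nat) (w : 'I_n -> int).

Definition conj_diag (A : 'M[k]_n) : 'M[K]_n :=
  invmx (map_mx frac_const A) *m diag_mx (\row_i t ^ w i) *m map_mx frac_const A.

Lemma det_conj_diag A : A \in unitmx -> \sum_i w i = 0 -> \det (conj_diag A) = 1.
Proof.
move=> A_unit w_sum0; rewrite !det_mulmx det_inv mulrC mulrA mulrV ?mul1r.
  exact: det_diag_expfz tofracX_neq0 w_sum0.
by rewrite -unitmxE map_unitmx.
Qed.

Lemma lin_subst_diag_limit0 (p : {mpoly k[n]}) :
  {in msupp p, forall m, 0 < wdeg w m} ->
  exists2 P : {mpoly {poly k}[n]},
      map_mpoly (@tofrac _) P
      = lin_subst (diag_mx (\row_i t ^ w i)) (map_mpoly frac_const p)
    & map_mpoly (horner_eval 0) P = 0.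
Proof.
move=> wdeg_gt0.
exists (\sum_(m <- msupp p) (p@_m *: 'X^(absz (wdeg w m))) *: 'X_[m]).
  rewrite lin_subst_diag_expfz ?tofracX_neq0 //.
  rewrite (perm_big _ (msupp_map_mpoly p (fmorph_inj frac_const))) raddf_sum /= !big_seq.
  apply: eq_bigr => m m_p; rewrite map_mpolyZ map_mpolyX mcoeff_map_mpoly.
  by rewrite -mul_polyC rmorphM rmorphXn /= exprnP gez0_abs ?ltW ?wdeg_gt0.
rewrite raddf_sum big_seq big1 // => m m_p /=.
rewrite map_mpolyZ -mul_polyC rmorphM rmorphXn /= /horner_eval hornerX expr0n.
by rewrite absz_eq0 gt_eqF ?wdeg_gt0 // mulr0 scale0r.
Qed.

Lemma lin_subst_conj_diag_limit0 (A : 'M[k]_n) (p : {mpoly k[n]}) :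
  A \in unitmx -> {in msupp p, forall m, 0 < wdeg w m} ->
  exists2 P : {mpoly {poly k}[n]},
      map_mpoly (@tofrac _) P
      = lin_subst (conj_diag A) (map_mpoly frac_const (lin_subst A p))
    & map_mpoly (horner_eval 0) P = 0.
Proof.
move=> A_unit /lin_subst_diag_limit0 [P0 P0E P0_lim].
exists (lin_subst (map_mx polyC A) P0).
  rewrite map_mpoly_lin_subst -map_mx_comp P0E lin_substM.
  rewrite (map_mpoly_lin_subst frac_const) lin_substM.
  rewrite /conj_diag !mulmxA mulmxV ?mul1mx; last by rewrite map_unitmx.
  by congr (lin_subst (_ *m map_mx _ _) _).
by rewrite map_mpoly_lin_subst P0_lim /lin_subst raddf0.
Qed.

End OneParameterSubgroup.

Lemma SL_invariant_eq0_of_wdeg_gt0 (k : fieldType) n d (w : 'I_n -> int)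
    (A : 'M[k]_n) (p : {mpoly k[n]}) m (F : {mpoly k[#|{: Mon n d}|]}) :
  \sum_i w i = 0 -> {in msupp p, forall mm, 0 < wdeg w mm} -> A \in unitmx ->
  act A p \is (d.+1).-homog -> (0 < m)%N -> F \is m.-homog -> SL_invariant F ->
  F.@[coeffs d (act A p)] = 0.
Proof.
move=> w_sum0 w_gt0 A_unit f_homog m_gt0 F_homog F_inv.
have [P PE P_lim] := lin_subst_conj_diag_limit0 A_unit w_gt0.
pose q (j : 'I_#|{: Mon n d}|) := P@_(val (val (enum_val j))).
apply: (homog_vanishes_at_limit0 m_gt0 F_homog (q := q)) => [j|].
  have := congr1 (mcoeff (val (val (enum_val j)))) P_lim.
  by rewrite mcoeff0 (mcoeff_map_mpoly (horner_eval 0)) /= horner_evalE.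
pose h := map_mpoly (frac_const k) (act A p).
have h_homog : h \is (d.+1).-homog.
  by rewrite dhomogE (perm_all _ (msupp_map_mpoly _ (fmorph_inj _))) -dhomogE.
have coeffs_h : coeffs d h =1 frac_const k \o coeffs d (act A p).
  by move=> j; rewrite /coeffs [LHS]mcoeff_map_mpoly.
have coeffs_gh : coeffs d (act (conj_diag w A) h) =1 (@tofrac _) \o q.
  by move=> j; rewrite /coeffs actE -PE [LHS]mcoeff_map_mpoly.
rewrite -(meval_eq _ coeffs_gh).
rewrite (F_inv _ (frac_const k) _ (det_conj_diag A_unit w_sum0) h h_homog).
by rewrite (meval_eq _ coeffs_h) (meval_map_mpoly (frac_const k)).
Qed.

(* The three blocks of variables get weights -(2n+1-2l), n+1 and l, of total
   weight l(-(2n+1-2l)) + l(n+1) + (n-2l)l = 0.  Since d >= 2, a monomial of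
   x_i dH/dx_(l+i) has weight >= -(2n+1-2l) + 2(n+1) > 0, and a monomial of G
   has weight at least its degree. *)
Definition lds_weight (n l i : nat) : int :=
  if (i < l)%N then - (n.+1 + (n - 2 * l))%N%:Z
  else if (i < 2 * l)%N then n.+1 else l.

Lemma sum_lds_weight n l : (2 * l <= n)%N -> \sum_(i < n) lds_weight n l i = 0.
Proof.
move=> l2n; rewrite -(big_mkord xpredT (lds_weight n l)).
rewrite (big_cat_nat (n := l)) //=; last by lia.
rewrite (big_cat_nat (m := l) (n := 2 * l)) //=; try lia.
rewrite (eq_big_nat _ _ (F2 := fun=> - (n.+1 + (n - 2 * l))%N%:Z)); last first.
  by move=> i /andP [_ il]; rewrite /lds_weight il.
rewrite (eq_big_nat (m := l) (n := 2 * l) _ _ (F2 := fun=> (n.+1)%:Z)); last first.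
  by move=> i /andP [li il]; rewrite /lds_weight il ltnNge li.
rewrite (eq_big_nat (m := 2 * l) (n := n) _ _ (F2 := fun=> l%:Z)); last first.
  by move=> i /andP [li _]; rewrite /lds_weight !ltnNge li; have -> : (l <= i)%N by lia.
rewrite !sumr_const_nat !pmulrn !mulrzz; lia.
Qed.

Definition lds_poly (R : comNzRingType) (n l : nat) (H G : {mpoly R[n]}) : {mpoly R[n]} :=
  \sum_(i < n) \sum_(j < n | (i < l)%N && (j == l + i :> nat)) 'X_i * mderiv j H + G.

Section LDSWeights.
Variables (R : comNzRingType) (n d l : nat) (H G : {mpoly R[n]}).
Hypotheses (d_ge2 : (2 <= d)%N) (l_gt0 : (0 < l)%N).
Hypotheses (H_homog : H \is (d.+1).-homog) (G_homog : G \is (d.+1).-homog).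
Hypothesis H_supp :
  forall m, m \in msupp H -> forall i : 'I_n, m i != 0%N -> (l <= i < 2 * l)%N.
Hypothesis G_supp : forall m, m \in msupp G -> forall i : 'I_n, m i != 0%N -> (l <= i)%N.

Local Notation w := (fun i : 'I_n => lds_weight n l i).

Lemma mdeg_le_wdeg_lds (m : 'X_{1..n}) :
  (forall i : 'I_n, m i != 0%N -> (l <= i)%N) -> (mdeg m)%:Z <= wdeg w m.
Proof.
move=> m_supp; rewrite mdegE /wdeg (big_morph Posz PoszD (erefl 0%:Z)).
apply: ler_sum => i _; have [->|mi_nz] := eqVneq (m i) 0%N; first by rewrite mulr0.
rewrite /lds_weight ltnNge m_supp //=.
by case: ifP => _; rewrite ler_pMl //; lia.
Qed.

Lemma wdeg_lds_mid (m : 'X_{1..n}) :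
  (forall i : 'I_n, m i != 0%N -> (l <= i < 2 * l)%N) -> wdeg w m = (n.+1 * mdeg m)%N%:Z.
Proof.
move=> m_supp; rewrite mdegE big_distrr /= (big_morph Posz PoszD (erefl 0%:Z)).
apply: eq_bigr => i _; have [->|mi_nz] := eqVneq (m i) 0%N; first by rewrite mulr0 muln0.
by have /andP [li il] := m_supp i mi_nz; rewrite /lds_weight ltnNge li il.
Qed.

Lemma wdeg_lds_G_gt0 m : m \in msupp G -> 0 < wdeg w m.
Proof.
move=> mG; apply: lt_le_trans (mdeg_le_wdeg_lds (G_supp mG)).
by rewrite (dhomog_mf G_homog mG).
Qed.

Lemma wdeg_lds_H_gt0 (i j : 'I_n) m : (i < l)%N -> j = l + i :> nat ->
  m \in msupp ('X_i * mderiv j H) -> 0 < wdeg w m.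
Proof.
move=> il jE; rewrite mulrC (perm_mem (msuppMX _ _)) => /mapP [m' m'_der ->].
have m'H : (m' + U_(j))%MM \in msupp H.
  move: m'_der; rewrite !mcoeff_msupp mcoeff_mderiv.
  by apply: contraNneq => ->; rewrite mul0rn.
have dm' : mdeg m' = d.
  have : mdeg (m' + U_(j))%MM = d.+1 := dhomog_mf H_homog m'H.
  by rewrite mdegD mdeg1 addn1 => -[].
have wm' : wdeg w m' = (n.+1 * d)%N%:Z.
  rewrite -dm'; apply: wdeg_lds_mid => i' m'i'.
  by apply: (H_supp m'H); rewrite mnmDE; lia.
rewrite wdegD wdegU wm' /lds_weight il.
have : (n.+1 * 2 <= n.+1 * d)%N by rewrite leq_mul2l d_ge2 orbT.
lia.
Qed.

Lemma lds_poly_wdeg_gt0 : {in msupp (lds_poly l H G), forall m, 0 < wdeg w m}.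
Proof.
move=> m /msuppD_le; rewrite mem_cat => /orP [|/wdeg_lds_G_gt0 //].
move=> /msupp_sum_le /flattenP [s /mapP [i _ ->]] /msupp_sum_le /flattenP [s' /mapP [j]].
rewrite mem_filter => /andP [/andP [il /eqP jE] _] ->.
exact: wdeg_lds_H_gt0.
Qed.

End LDSWeights.

Theorem lemma1p4 (k : fieldType) (n d : nat) (f : {mpoly k[n]}) :
  (2 <= d)%N -> f \is (d.+1).-homog -> LDS d f -> ~ semistable d f.
Proof.
move=> d_ge2 f_homog [l [l_gt0 [l2n [A [A_unit [H [G]]]]]]].
move=> [H_homog [G_homog [H_supp [G_supp fE]]]].
move=> [m [m_gt0 [F [F_homog [F_inv /eqP []]]]]].
rewrite fE in f_homog *.
have lds_gt0 := lds_poly_wdeg_gt0 d_ge2 l_gt0 H_homog G_homog H_supp G_supp.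
exact: SL_invariant_eq0_of_wdeg_gt0 (sum_lds_weight l2n) lds_gt0 A_unit f_homog
  m_gt0 F_homog F_inv.
Qed.
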